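(* Let $K$ be a ramified quadratic extension of $\mathbb{Q}_2$, $d=2m$ with $m$ odd, $m\ge3$, and $f=a_1x_1^d+\dots+a_sx_s^d$ with all $a_i\in\mathcal{O}\setminus\{0\}$. Suppose $s\ge\frac{7}{5}d$, $f$ is normalized, and $f$ has at least five variables at level $0$. Then $f$ has a nontrivial zero in $K$. If $K\in\{\mathbb{Q}_2(\sqrt{-1}),\mathbb{Q}_2(\sqrt{-5})\}$, the same conclusion holds with the assumption $s\ge\frac75 d$ replaced by $s\ge d+1$.
   Context: $\mathcal{O}$ is the ring of integers of $K$ and $\pi$ the uniformizer: $\pi=\sqrt{2},\sqrt{-2},\sqrt{10},\sqrt{-10},1+\sqrt{-1},1+\sqrt{-5}$ for $K=\mathbb{Q}_2(\sqrt2),\mathbb{Q}_2(\sqrt{-2}),\mathbb{Q}_2(\sqrt{10}),\mathbb{Q}_2(\sqrt{-10}),\mathbb{Q}_2(\sqrt{-1}),\mathbb{Q}_2(\sqrt{-5})$ respectively. Each unit $u$ has a unique expansion $u=c_0+c_1\pi+c_2\pi^2+\cdots$ with $c_j\in\{0,1\}$, $c_0=1$. Writing $a_i=\pi^r u$ with $u$ a unit, the variable $x_i$ is at level $r\bmod d$ (levels are residues in $\{0,\dots,d-1\}$), and its $\pi$-coefficient is $c_1$ of $u$. Let $s_j$ be the number of variables at level $j$. The form is normalized if $s_0+s_1+\dots+s_j\ge \frac{(j+1)s}{d}$ for every $j=0,1,\dots,d-1$. A nontrivial zero is a point of $K^s$, not all coordinates zero, where $f$ vanishes. *)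

From mathcomp Require Import all_boot all_algebra.
Set Implicit Arguments. Unset Strict Implicit. Unset Printing Implicit Defensive.
Import GRing.Theory Num.Theory.
Local Open Scope ring_scope.

Inductive ramfield := Q2_s2 | Q2_sm2 | Q2_s10 | Q2_sm10 | Q2_sm1 | Q2_sm5.

(* K = Q_2(sqrt (Dof K)) *)
Definition Dof (K : ramfield) : int :=
  match K with
  | Q2_s2 => 2 | Q2_sm2 => -2 | Q2_s10 => 10 | Q2_sm10 => -10
  | Q2_sm1 => -1 | Q2_sm5 => -5 end.

(* Elements of Z[sqrt D] as pairs (x, y) = x + y sqrt D. *)
Definition zq := (int * int)%type.
Definition zq0 : zq := (0, 0).
Definition zq1 : zq := (1, 0).
Definition zqadd (x y : zq) : zq := (x.1 + y.1, x.2 + y.2).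
Definition zqmul (D : int) (x y : zq) : zq :=
  (x.1 * y.1 + D * (x.2 * y.2), x.1 * y.2 + x.2 * y.1).
Definition zqpow (D : int) (x : zq) (n : nat) : zq := iter n (zqmul D x) zq1.

(* The uniformizer pi of K, as given in the paper. *)
Definition piof (K : ramfield) : zq :=
  match K with
  | Q2_s2 | Q2_sm2 | Q2_s10 | Q2_sm10 => (0, 1)
  | Q2_sm1 | Q2_sm5 => (1, 1)
  end.

Definition zqcong (n : nat) (x y : zq) : Prop :=
  ((2 ^ n)%N%:Z %| x.1 - y.1)%Z /\ ((2 ^ n)%N%:Z %| x.2 - y.2)%Z.

(* An element of O = Z_2[sqrt D] (as a set, Z_2 x Z_2) is a compatible
   system of approximations modulo 2^n (inverse limit of Z[sqrt D]/2^n). *)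
Record Oel := MkOel {
  oseq : nat -> zq ;
  ocompat : forall n k, (n <= k)%N -> zqcong n (oseq k) (oseq n) }.

Definition Oeq (x y : Oel) : Prop := forall n, zqcong n (oseq x n) (oseq y n).
Definition Ozero (x : Oel) : Prop := forall n, zqcong n (oseq x n) zq0.

Definition Ounit (K : ramfield) (u : Oel) : Prop :=
  exists v : Oel, forall n, zqcong n (zqmul (Dof K) (oseq u n) (oseq v n)) zq1.

Definition Odecomp (K : ramfield) (a : Oel) (r : nat) (u : Oel) : Prop :=
  forall n, zqcong n (oseq a n) (zqmul (Dof K) (zqpow (Dof K) (piof K) r) (oseq u n)).

(* An element of K is represented as x / 2^k with x in O, k : nat
   (every element of K has this form).  It is zero iff x = 0 in O.
   For y_i = x_i / 2^(k_i) and M = max k_i,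
   2^(d M) * f(y) = sum_i a_i x_i^d 2^(d (M - k_i)), so
   f(y) = 0 in K iff this element of O vanishes. *)
Definition diag_eval (K : ramfield) (s d : nat) (a x : 'I_s -> Oel)
    (k : 'I_s -> nat) (n : nat) : zq :=
  let M := (\max_(i < s) k i)%N in
  \big[zqadd/zq0]_(i < s)
     zqmul (Dof K) (oseq (a i) n)
       (zqmul (Dof K) (zqpow (Dof K) (oseq (x i) n) d)
                      ((2 ^ (d * (M - k i)))%N%:Z, 0)).

Definition has_nontrivial_zero (K : ramfield) (s d : nat) (a : 'I_s -> Oel) :=
  exists (x : 'I_s -> Oel) (k : 'I_s -> nat),
    (exists i, ~ Ozero (x i)) /\
    (forall n, zqcong n (diag_eval K d a x k n) zq0).

(* Levels: r i is the pi-adic valuation of a_i; level of x_i is r i mod d. *)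
Definition level_count (s d : nat) (r : 'I_s -> nat) (j : nat) : nat :=
  #|[set i : 'I_s | (r i %% d == j)%N]|.

Definition normalized (s d : nat) (r : 'I_s -> nat) : Prop :=
  forall j : nat, (j < d)%N ->
    (j.+1 * s <= d * \sum_(l < j.+1) level_count d r l)%N.

(* As 2 is pi^2 times a unit, the derivative d t^(d-1)
   of t^d lies exactly in pi^2 O for a unit t, so Hensel's lemma lifts a zero of
   f modulo pi^5 whose coordinate at some level-0 variable is a unit; scaling
   x_i by a power of pi first replaces each a_i = pi^r_i u_i by pi^(r_i mod d) u_i.
   Modulo pi^5 we have (1 + pi)^4 = 1, and d = 2 mod 4, so x^d takes the values
   0, 1, (1 + pi)^2 at x = 0, 1, 1 + pi. A finite computation in O / pi^5 O
   (32 residues, units taken up to the factor (1 + pi)^2) shows that the sums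
   u_1 w_1 + ... + u_5 w_5 of five units with weights w_i among these values,
   not all 0, either contain 0 or cover pi O \ pi^5 O; for Q_2(sqrt -1) they
   always contain 0, and for Q_2(sqrt -5) six units always reach 0. The
   normalization then provides five level-0 variables together with either a
   variable at a level l in [1, 4], whose term lies in pi O \ pi^5 O, or at least
   5s/d level-0 variables in all: seven when s >= 7d/5 (the extra pair sums into
   pi O), and six when s >= d + 1. *)
From HB Require Import structures.
From mathcomp Require Import all_boot all_algebra ring zify.
From Stdlib Require Import ClassicalEpsilon.
Set Implicit Arguments. Unset Strict Implicit. Unset Printing Implicit Defensive.
Import GRing.Theory Num.Theory.
Local Open Scope ring_scope.

Lemma exprD_expansion (R : comNzRingType) (t h : R) n :
  exists Q : R, (t + h) ^+ n.+1 = t ^+ n.+1 + n.+1%:R * t ^+ n * h + h * h * Q.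
Proof.
elim: n => [|n [Q IH]]; first by exists 0; rewrite !expr1 expr0; ring.
exists (t * Q + n.+1%:R * t ^+ n + h * Q).
by rewrite exprS IH !exprS -[n.+2%:R]natr1; ring.
Qed.

Lemma int_even_or_odd (x : int) : exists k : int, x = 2 * k \/ x = 2 * k + 1.
Proof.
exists (x %/ 2)%Z; have := divz_eq x 2.
have := modz_ge0 x (isT : (2 : int) != 0); have := ltz_pmod x (isT : (0 < (2 : int))).
lia.
Qed.

Lemma nat_even_or_odd (j : nat) : (exists i, j = i.*2) \/ (exists i, j = i.*2.+1).
Proof.
by rewrite -(odd_double_half j); case: (odd j); [right | left]; exists j./2.
Qed.

Lemma index_of_nth (T : eqType) (L : seq T) k : uniq L -> (k < size L)%N ->
  exists2 p, p \in L & index p L = k.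
Proof.
by case: L => // x L uL kL; exists (nth x (x :: L) k); [apply: mem_nth | apply: index_uniq].
Qed.

Definition zsqrt (D : int) : Type := zq.
HB.instance Definition _ (D : int) := GRing.Zmodule.on (zsqrt D).

Section ZsqrtRing.
Variable D : int.
Local Notation R := (zsqrt D).

Lemma zqmulA : associative (zqmul D : R -> R -> R).
Proof. by move=> [a b] [c e] [f g]; rewrite /zqmul /=; congr pair; ring. Qed.
Lemma zqmulC : commutative (zqmul D : R -> R -> R).
Proof. by move=> [a b] [c e]; rewrite /zqmul /=; congr pair; ring. Qed.
Lemma zqmul1 : left_id (zq1 : R) (zqmul D).
Proof. by move=> [a b]; rewrite /zqmul /=; congr pair; ring. Qed.
Lemma zqmulDl : left_distributive (zqmul D : R -> R -> R) +%R.
Proof. by move=> [a b] [c e] [f g]; rewrite /zqmul /=; congr pair => /=; ring. Qed.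
Lemma zq1_neq0 : (zq1 : R) != 0. Proof. by []. Qed.
End ZsqrtRing.

HB.instance Definition _ (D : int) := GRing.Zmodule_isComNzRing.Build (zsqrt D)
  (@zqmulA D) (@zqmulC D) (@zqmul1 D) (@zqmulDl D) (@zq1_neq0 D).

Definition dvd2 (D : int) (n : nat) (x : zsqrt D) :=
  exists y : zsqrt D, x = (2 ^ n)%N%:R * y.

Section Zsqrt.
Variable D : int.
Local Notation R := (zsqrt D).
Local Notation dvd2 := (@dvd2 D).

Lemma zsqrt_mulE (x y : R) : x * y = (x.1 * y.1 + D * (x.2 * y.2), x.1 * y.2 + x.2 * y.1).
Proof. by []. Qed.
Lemma zsqrt_addE (x y : R) : x + y = (x.1 + y.1, x.2 + y.2).
Proof. by []. Qed.
Lemma zsqrt_subE (x y : R) : x - y = (x.1 - y.1, x.2 - y.2).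
Proof. by []. Qed.
Lemma zsqrt_natE (n : nat) : (n%:R : R) = (n%:Z, 0).
Proof. by elim: n => [//|n IH]; rewrite mulrS IH zsqrt_addE /= addr0; congr pair; lia. Qed.
Lemma zqpowE (x : zq) n : zqpow D x n = (x : R) ^+ n.
Proof. by elim: n => [//|n IH] /=; rewrite exprS IH. Qed.

Lemma dvd2P n (x : R) :
  dvd2 n x <-> ((2 ^ n)%N%:Z %| x.1)%Z /\ ((2 ^ n)%N%:Z %| x.2)%Z.
Proof.
split=> [[y ->]|].
  by rewrite zsqrt_natE zsqrt_mulE /= !mul0r !mulr0 !addr0; split; apply: dvdz_mulr.
case: x => [a b] /= [/dvdzP [q1 ->] /dvdzP [q2 ->]].
by exists (q1, q2); rewrite zsqrt_natE zsqrt_mulE /=; congr pair; ring.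
Qed.

Lemma zqcong_dvd2 n (x y : zq) : zqcong n x y <-> dvd2 n ((x : R) - (y : R)).
Proof. by rewrite dvd2P. Qed.

Lemma dvd20 n : dvd2 n 0. Proof. by exists 0; rewrite mulr0. Qed.
Lemma dvd2D n (x y : R) : dvd2 n x -> dvd2 n y -> dvd2 n (x + y).
Proof. by move=> [a ->] [b ->]; exists (a + b); rewrite mulrDr. Qed.
Lemma dvd2N n (x : R) : dvd2 n x -> dvd2 n (- x).
Proof. by move=> [a ->]; exists (- a); rewrite mulrN. Qed.
Lemma dvd2B n (x y : R) : dvd2 n x -> dvd2 n y -> dvd2 n (x - y).
Proof. by move=> hx hy; apply/dvd2D/dvd2N. Qed.
Lemma dvd2Mr n (x y : R) : dvd2 n x -> dvd2 n (x * y).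
Proof. by move=> [a ->]; exists (a * y); rewrite mulrA. Qed.
Lemma dvd2Ml n (x y : R) : dvd2 n y -> dvd2 n (x * y).
Proof. by rewrite mulrC; apply: dvd2Mr. Qed.
Lemma dvd2_sum n (I : finType) (P : pred I) (F : I -> R) :
  (forall i, P i -> dvd2 n (F i)) -> dvd2 n (\sum_(i | P i) F i).
Proof. by move=> h; apply: big_ind => //; [apply: dvd20 | apply: dvd2D]. Qed.

Lemma pow2M_inj n : injective (fun x : R => (2 ^ n)%N%:R * x).
Proof.
move=> [a b] [c e] /=; rewrite !zsqrt_natE !zsqrt_mulE /= !mul0r !mulr0 !addr0.
have n0 : (2 ^ n)%N%:Z != 0 by rewrite eqz_nat expn_eq0.
by case=> /(mulfI n0) -> /(mulfI n0) ->.
Qed.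

Lemma oseq_dvd2 (x : Oel) n k : (n <= k)%N -> dvd2 n ((oseq x k : R) - oseq x n).
Proof. by move=> le; apply/zqcong_dvd2/ocompat. Qed.
End Zsqrt.

Definition pi_is_sqrt (K : ramfield) : bool :=
  match K with Q2_sm1 | Q2_sm5 => false | _ => true end.

(* [piof K ^ 2 = 2 * eta K]; [eta K] is a unit of O but, for D = 10 or -5,
   not of Z[sqrt D]. *)
Definition eta (K : ramfield) : zq :=
  match K with
  | Q2_s2 => (1, 0) | Q2_sm2 => (-1, 0) | Q2_s10 => (5, 0) | Q2_sm10 => (-5, 0)
  | Q2_sm1 => (0, 1) | Q2_sm5 => (-2, 1) end.

(* The prime ideal P = (pi, 2) of Z[sqrt D] lying under pi O. *)
Definition in_P (K : ramfield) (x : zsqrt (Dof K)) :=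
  exists a b : zsqrt (Dof K), x = (piof K : zsqrt (Dof K)) * a + 2%:R * b.

Section PrimeIdeal.
Variable K : ramfield.
Local Notation R := (zsqrt (Dof K)).
Local Notation pi := (piof K : R).
Local Notation eta := (eta K : R).
Local Notation dvd2 := (@dvd2 (Dof K)).
Local Notation in_P := (@in_P K).

Lemma in_PE (x : R) :
  in_P x <-> exists k : int, (if pi_is_sqrt K then x.1 else x.1 - x.2) = 2 * k.
Proof.
case: x => [x1 x2]; split.
  move=> [[a1 a2] [[b1 b2]]]; rewrite zsqrt_natE zsqrt_mulE zsqrt_addE /=.
  case: K => /= -[E1 E2];
  by [exists (a2 + b1); lia | exists (- a2 + b1); lia | exists (5 * a2 + b1); lia
     | exists (-5 * a2 + b1); lia | exists (- a2 + b1 - b2); lia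
     | exists (- 3 * a2 + b1 - b2); lia].
move=> [k]; case: K => /= hk;
  by exists (x2, 0), (k, 0); rewrite zsqrt_natE zsqrt_mulE zsqrt_addE /=; congr pair; lia.
Qed.

Lemma sqr_pi : pi * pi = 2%:R * eta.
Proof. by case: K. Qed.

Lemma in_PD x y : in_P x -> in_P y -> in_P (x + y).
Proof. by move=> [a [b ->]] [a' [b' ->]]; exists (a + a'), (b + b'); ring. Qed.
Lemma in_PN x : in_P x -> in_P (- x).
Proof. by move=> [a [b ->]]; exists (- a), (- b); ring. Qed.
Lemma in_PB x y : in_P x -> in_P y -> in_P (x - y).
Proof. by move=> hx hy; apply/in_PD/in_PN. Qed.
Lemma in_PMr x y : in_P x -> in_P (x * y).
Proof. by move=> [a [b ->]]; exists (a * y), (b * y); ring. Qed.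
Lemma in_PMl x y : in_P y -> in_P (x * y).
Proof. by rewrite mulrC; apply: in_PMr. Qed.
Lemma in_P0 : in_P 0.
Proof. by exists 0, 0; ring. Qed.
Lemma in_P_pi : in_P pi.
Proof. by exists 1, 0; ring. Qed.
Lemma in_P_2M y : in_P (2%:R * y).
Proof. by exists 0, y; ring. Qed.

Lemma dvd2_in_PM x y : in_P x -> in_P y -> dvd2 1 (x * y).
Proof.
move=> [a [b ->]] [a' [b' ->]].
exists (eta * a * a' + pi * a * b' + b * pi * a' + 2%:R * b * b').
have -> : (pi * a + 2%:R * b) * (pi * a' + 2%:R * b') =
   (pi * pi) * a * a' + 2%:R * (pi * a * b' + b * pi * a' + 2%:R * b * b') by ring.
by rewrite sqr_pi; ring.
Qed.

Lemma in_P_or_subr1 x : in_P x \/ in_P (x - 1).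
Proof.
rewrite !in_PE zsqrt_subE /=; case: x => [x1 x2] /=.
case: (pi_is_sqrt K); last case: (int_even_or_odd (x1 - x2)) => k [] E.
all: try case: (int_even_or_odd x1) => k [] E.
all: by [left; exists k; lia | right; exists k; lia].
Qed.

Lemma in_P_dvd2_or_subr_pi x : in_P x -> dvd2 1 x \/ dvd2 1 (x - pi).
Proof.
rewrite in_PE !dvd2P zsqrt_subE; case: x => [x1 x2] /= [k Ek].
have dvd2E (z : int) : ((2 ^ 1)%N%:Z %| z)%Z <-> exists q : int, z = 2 * q.
  split=> [/dvdzP [q ->]|[q ->]]; [by exists q; rewrite mulrC | exact: dvdz_mulr].
rewrite !dvd2E; case: (int_even_or_odd x2) => q [] E2; move: Ek; case: K => /= Ek.
all: by [left; split; [exists k | exists q]; lia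
     | right; split; [exists k | exists q]; lia
     | left; split; [exists (k + q) | exists q]; lia
     | right; split; [exists (k + q) | exists q]; lia].
Qed.

Lemma not_in_P1 : ~ in_P 1.
Proof. by rewrite in_PE => -[k]; case: (pi_is_sqrt K) => /=; lia. Qed.

Lemma not_dvd2_pi : ~ dvd2 1 pi.
Proof. by rewrite dvd2P => -[/dvdzP [q1 E1] /dvdzP [q2 E2]]; move: E1 E2; case: K => /=; lia. Qed.

Lemma not_in_P_eta : ~ in_P eta.
Proof. by rewrite in_PE => -[k]; case: K => /=; lia. Qed.

Lemma in_PD_subr1 x y : in_P (x - 1) -> in_P (y - 1) -> in_P (x + y).
Proof.
have -> : x + y = (x - 1) + (y - 1) + 2%:R * 1 by ring.
by move=> hx hy; apply: in_PD; [apply: in_PD | apply: in_P_2M].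
Qed.

Lemma in_P_addr_units x y : ~ in_P x -> ~ in_P y -> in_P (x + y).
Proof.
move=> hx hy; case: (in_P_or_subr1 x) => // hx'; case: (in_P_or_subr1 y) => // hy'.
exact: in_PD_subr1.
Qed.

Lemma not_in_PM x y : ~ in_P x -> ~ in_P y -> ~ in_P (x * y).
Proof.
move=> hx hy hxy; case: (in_P_or_subr1 x) => // hx'; case: (in_P_or_subr1 y) => // hy'.
apply: not_in_P1; have -> : 1 = x * y - ((x - 1) * (y - 1) + (x - 1) + (y - 1)) by ring.
by apply: in_PB => //; apply: in_PD => //; apply: in_PD => //; apply: in_PMr.
Qed.

Lemma not_in_PX x n : ~ in_P x -> ~ in_P (x ^+ n).
Proof.
move=> hx; elim: n => [|n IH]; first by rewrite expr0; apply: not_in_P1.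
by rewrite exprS; apply: not_in_PM.
Qed.

Lemma not_dvd2_pi_mul y : ~ in_P y -> ~ dvd2 1 (pi * y).
Proof.
move=> hy h; case: (in_P_or_subr1 y) => // hy'; apply: not_dvd2_pi.
have -> : pi = pi * y - pi * (y - 1) by ring.
by apply: dvd2B => //; apply: dvd2_in_PM => //; apply: in_P_pi.
Qed.

Lemma not_in_P_odd n : odd n -> ~ in_P n%:R.
Proof.
move=> on h; apply: not_in_P1.
have -> : 1 = n%:R - 2%:R * (n./2)%:R :> R.
  have {1}-> : n = (2 * n./2 + 1)%N by rewrite -{1}(odd_double_half n) on -mul2n addnC.
  by rewrite natrD natrM; ring.
by apply: in_PB => //; apply: in_P_2M.
Qed.
End PrimeIdeal.

(* Membership in P^j, using P^2 = 2 Z[sqrt D]. *)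
Definition in_Pn (K : ramfield) (j : nat) (x : zsqrt (Dof K)) :=
  exists y : zsqrt (Dof K), x = (2 ^ j./2)%N%:R * y /\ (odd j -> in_P y).

Section PrimeIdealPowers.
Variable K : ramfield.
Local Notation R := (zsqrt (Dof K)).
Local Notation pi := (piof K : R).
Local Notation eta := (eta K : R).
Local Notation dvd2 := (@dvd2 (Dof K)).
Local Notation in_P := (@in_P K).
Local Notation in_Pn := (@in_Pn K).

Lemma in_Pn_double n x : in_Pn n.*2 x <-> dvd2 n x.
Proof.
rewrite /in_Pn doubleK odd_double.
by split=> [[y [-> _]]|[y ->]]; exists y.
Qed.

Lemma in_Pn_doubleS n x : in_Pn n.*2.+1 x <-> exists y, x = (2 ^ n)%N%:R * y /\ in_P y.
Proof.
rewrite /in_Pn /= uphalf_double odd_double /=.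
by split=> -[y [-> h]]; exists y; split=> //; apply: h.
Qed.

Lemma in_PnD j x y : in_Pn j x -> in_Pn j y -> in_Pn j (x + y).
Proof.
move=> [a [-> ha]] [b [-> hb]]; exists (a + b); split; first by rewrite mulrDr.
by move=> oj; apply: in_PD; [apply: ha | apply: hb].
Qed.
Lemma in_PnN j x : in_Pn j x -> in_Pn j (- x).
Proof.
move=> [a [-> ha]]; exists (- a); split; first by rewrite mulrN.
by move=> oj; apply/in_PN/ha.
Qed.
Lemma in_PnB j x y : in_Pn j x -> in_Pn j y -> in_Pn j (x - y).
Proof. by move=> hx hy; apply/in_PnD/in_PnN. Qed.
Lemma in_PnMr j x y : in_Pn j x -> in_Pn j (x * y).
Proof.
move=> [a [-> ha]]; exists (a * y); split; first by rewrite mulrA.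
by move=> oj; apply/in_PMr/ha.
Qed.
Lemma in_PnMl j x y : in_Pn j y -> in_Pn j (x * y).
Proof. by rewrite mulrC; apply: in_PnMr. Qed.
Lemma in_Pn0 j : in_Pn j 0.
Proof. by exists 0; split; [rewrite mulr0 | move=> _; apply: in_P0]. Qed.

Lemma in_PnS j x : in_Pn j.+1 x -> in_Pn j x.
Proof.
case: (nat_even_or_odd j) => -[i ->].
  by move/in_Pn_doubleS => [y [-> _]]; apply/in_Pn_double; exists y.
rewrite -doubleS => /in_Pn_double [y ->]; apply/in_Pn_doubleS.
exists (2%:R * y); split; last exact: in_P_2M.
by rewrite expnS natrM mulrA [_ * 2%:R]mulrC.
Qed.

Lemma in_Pn_le i j x : (i <= j)%N -> in_Pn j x -> in_Pn i x.
Proof.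
move=> /subnK <-; elim: (j - i)%N => [//|k IH] h.
by apply/IH/in_PnS; rewrite -addSn.
Qed.

Lemma dvd2_in_Pn n j x : (j <= n.*2)%N -> dvd2 n x -> in_Pn j x.
Proof. by move=> le /in_Pn_double; apply: in_Pn_le. Qed.

Lemma in_Pn_in_P j x : (0 < j)%N -> in_Pn j x -> in_P x.
Proof. by move=> j0 /(in_Pn_le j0) [y [-> hy]]; rewrite expn0 mul1r; apply: hy. Qed.

Lemma in_PnM i j x y : in_Pn i x -> in_Pn j y -> in_Pn (i + j) (x * y).
Proof.
case: (nat_even_or_odd i) => -[a ->]; case: (nat_even_or_odd j) => -[b ->].
- move=> /in_Pn_double [x' ->] /in_Pn_double [y' ->]; rewrite -doubleD.
  by apply/in_Pn_double; exists (x' * y'); rewrite expnD natrM; ring.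
- move=> /in_Pn_double [x' ->] /in_Pn_doubleS [y' [-> hy]].
  rewrite addnS -doubleD; apply/in_Pn_doubleS; exists (x' * y').
  by split; [rewrite expnD natrM; ring | apply: in_PMl].
- move=> /in_Pn_doubleS [x' [-> hx]] /in_Pn_double [y' ->].
  rewrite addSn -doubleD; apply/in_Pn_doubleS; exists (x' * y').
  by split; [rewrite expnD natrM; ring | apply: in_PMr].
- move=> /in_Pn_doubleS [x' [-> hx]] /in_Pn_doubleS [y' [-> hy]].
  rewrite addSn addnS -doubleD -doubleS; apply/in_Pn_double.
  have [v hv] := dvd2_in_PM hx hy; exists v.
  have -> : (2 ^ a)%N%:R * x' * ((2 ^ b)%N%:R * y') = (2 ^ a * 2 ^ b)%N%:R * (x' * y') :> R.
    by rewrite natrM; ring.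
  by rewrite hv expn1 expnS expnD !natrM; ring.
Qed.

Lemma piX_double i : pi ^+ i.*2 = (2 ^ i)%N%:R * eta ^+ i.
Proof. by rewrite -mul2n exprM expr2 sqr_pi exprMn -natrX. Qed.

Lemma in_Pn_piX j : in_Pn j (pi ^+ j).
Proof.
case: (nat_even_or_odd j) => -[i ->].
  by apply/in_Pn_double; exists (eta ^+ i); rewrite piX_double.
apply/in_Pn_doubleS; exists (eta ^+ i * pi); split; last exact/in_PMl/in_P_pi.
by rewrite exprS piX_double; ring.
Qed.

Lemma not_in_Pn_piX_unit j w : ~ in_P w -> ~ in_Pn j.+1 (pi ^+ j * w).
Proof.
move=> hw; case: (nat_even_or_odd j) => -[i ->].
all: have hu : ~ in_P (eta ^+ i * w) := not_in_PM (not_in_PX (n := i) (@not_in_P_eta K)) hw.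
  move/in_Pn_doubleS => [y [E hy]]; apply: hu.
  suff -> : eta ^+ i * w = y by [].
  by apply: (@pow2M_inj _ i); rewrite /= -E piX_double mulrA.
rewrite -doubleS => /in_Pn_double [y E]; apply: (not_dvd2_pi_mul hu).
exists y; apply: (@pow2M_inj _ i) => /=.
by rewrite [RHS]mulrA -natrM -expnSr -E exprS piX_double; ring.
Qed.

Lemma in_PnS_or_addr j e g : in_Pn j e -> in_Pn j g -> ~ in_Pn j.+1 g ->
  in_Pn j.+1 e \/ in_Pn j.+1 (e + g).
Proof.
case: (nat_even_or_odd j) => -[i ->].
  move=> /in_Pn_double [e' ->] /in_Pn_double [g' ->] ng.
  have {}ng : ~ in_P g' by move=> h; apply: ng; apply/in_Pn_doubleS; exists g'.
  case: (in_P_or_subr1 e') => he; first by left; apply/in_Pn_doubleS; exists e'.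
  right; apply/in_Pn_doubleS; exists (e' + g'); split; first by rewrite mulrDr.
  by case: (in_P_or_subr1 g') => // hg; apply: in_PD_subr1.
rewrite -doubleS => /in_Pn_doubleS [e' [-> he]] /in_Pn_doubleS [g' [-> hg]] ng.
have pow2S y : (2 ^ i)%N%:R * ((2 ^ 1)%N%:R * y) = (2 ^ i.+1)%N%:R * y :> R.
  by rewrite mulrA -natrM -expnSr.
have {}ng : ~ dvd2 1 g' by move=> [y hy]; apply: ng; apply/in_Pn_double; exists y; rewrite hy pow2S.
case: (in_P_dvd2_or_subr_pi he) => [[y hy]|he'].
  by left; apply/in_Pn_double; exists y; rewrite hy pow2S.
case: (in_P_dvd2_or_subr_pi hg) => [//|hg']; right.
have [y hy] : dvd2 1 (e' + g').
  have -> : e' + g' = (e' - pi) + (g' - pi) + (2 ^ 1)%N%:R * pi by rewrite /=; ring.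
  by apply: dvd2D; [apply: dvd2D | exists pi].
by apply/in_Pn_double; exists y; rewrite -mulrDr hy pow2S.
Qed.
End PrimeIdealPowers.

Lemma Ounit_not_in_P (K : ramfield) (v : Oel) n : Ounit K v -> (0 < n)%N ->
  ~ @in_P K (oseq v n).
Proof.
move=> [w vw] n0 h; apply: (@not_in_P1 K).
have vw1 : @in_Pn K n.*2 ((oseq v n : zsqrt (Dof K)) * oseq w n - 1).
  exact/in_Pn_double/(@zqcong_dvd2 (Dof K))/vw.
have := in_PB (in_PMr (oseq w n : zsqrt (Dof K)) h) (in_Pn_in_P _ vw1).
by rewrite opprB addrC subrK; apply; rewrite double_gt0.
Qed.

Section Hensel.
Variables (K : ramfield) (m d : nat).
Hypotheses (dE : d = (2 * m)%N) (m_odd : odd m).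
Local Notation R := (zsqrt (Dof K)).
Local Notation pi := (piof K : R).
Local Notation dvd2 := (@dvd2 (Dof K)).
Local Notation in_P := (@in_P K).
Local Notation in_Pn := (@in_Pn K).

Lemma d_gt0 : (0 < d)%N.
Proof. by rewrite dE muln_gt0; case: m m_odd. Qed.

(* The derivative d t^(d-1) of t^d lies exactly in P^2, as d = 2m with m odd;
   hence a correction of t by pi^(j-2) moves t^d by exactly P^j. *)
Lemma hensel_step j t b : (5 <= j)%N -> ~ in_P t -> in_Pn j (t ^+ d - b) ->
  in_Pn j.+1 (t ^+ d - b) \/ in_Pn j.+1 ((t + pi ^+ (j - 2)) ^+ d - b).
Proof.
move=> j5 tu hE; set h := pi ^+ (j - 2).
have [Q HQ] := exprD_expansion t h d.-1; rewrite prednK ?d_gt0 // in HQ.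
set g := d%:R * t ^+ d.-1 * h.
have piXj : pi ^+ j = pi * pi * h by rewrite /h -expr2 -exprD subnKC //; lia.
have hg : in_Pn j g.
  have -> : g = (2 ^ 1)%N%:R * (m%:R * t ^+ d.-1) * h by rewrite /g dE natrM; ring.
  rewrite -(subnKC (_ : 2 <= j)%N); last by lia.
  by apply: in_PnM; [apply/(in_Pn_double 1); eexists | apply: in_Pn_piX].
have ng : ~ in_Pn j.+1 g.
  move=> /(in_PnMl (eta K : R)).
  have -> : (eta K : R) * g = pi ^+ j * (m%:R * t ^+ d.-1).
    by rewrite piXj sqr_pi /g dE natrM; ring.
  by apply: not_in_Pn_piX_unit; apply: not_in_PM; [apply: not_in_P_odd | apply: not_in_PX].
case: (in_PnS_or_addr hE hg ng) => [|hEg]; [by left | right].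
have -> : (t + h) ^+ d - b = (t ^+ d - b + g) + h * h * Q by rewrite HQ /g; ring.
apply: in_PnD => //; apply: in_PnMr; rewrite -exprD.
by apply: (in_Pn_le _ (in_Pn_piX K _)); lia.
Qed.

Variables (b : nat -> R) (t0 : R).
Hypotheses (b_coherent : forall n k, (n <= k)%N -> dvd2 n (b k - b n))
  (t0_unit : ~ in_P t0) (t0_root : in_Pn 5 (t0 ^+ d - b 5)).

Fixpoint hensel_seq k : R :=
  if k is k'.+1 then
    let t := hensel_seq k' in
    if excluded_middle_informative (in_Pn (k + 5) (t ^+ d - b (k + 5))) then t
    else t + pi ^+ (k' + 3)
  else t0.

Lemma hensel_seq_root k :
  ~ in_P (hensel_seq k) /\ in_Pn (k + 5) (hensel_seq k ^+ d - b (k + 5)).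
Proof.
elim: k => [//|k [tu hE]] /=; set t := hensel_seq k.
have {}hE : in_Pn (k + 5) (t ^+ d - b (k.+1 + 5)).
  have -> : t ^+ d - b (k.+1 + 5) = (t ^+ d - b (k + 5)) - (b (k.+1 + 5) - b (k + 5)).
    by ring.
  by apply: in_PnB => //; apply: (dvd2_in_Pn _ (b_coherent _)); lia.
case: excluded_middle_informative => [hS | hnS] /=; first by [].
case: (hensel_step (leq_addl k 5) tu hE) => [//|].
rewrite addSn (_ : k + 5 - 2 = k + 3)%N; last by lia.
split=> // tpu; apply: tu; rewrite -/t -(addrK (pi ^+ (k + 3)) t).
by apply: in_PB => //; apply: (in_Pn_in_P _ (in_Pn_piX K _)); rewrite addn_gt0 orbT.
Qed.

Lemma hensel_seq_coherent i j : (i <= j)%N -> in_Pn (i + 3) (hensel_seq j - hensel_seq i).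
Proof.
move=> /subnK <-; elim: (j - i)%N => [|l IH]; first by rewrite subrr; apply: in_Pn0.
rewrite addSn -(subrKA (hensel_seq (l + i))); apply: in_PnD => //=.
case: excluded_middle_informative => [hS | hnS] /=; first by rewrite subrr; apply: in_Pn0.
by rewrite addrC addKr; apply: (in_Pn_le _ (in_Pn_piX K _)); lia.
Qed.

Lemma hensel_lift : exists t : nat -> R,
  [/\ forall n k, (n <= k)%N -> dvd2 n (t k - t n),
      forall n, dvd2 n (t n ^+ d - b n) & forall n, ~ in_P (t n)].
Proof.
exists (fun n => hensel_seq n.*2); split=> [n k le | n | n]; last by case: (hensel_seq_root n.*2).
  apply/in_Pn_double; apply: (in_Pn_le _ (hensel_seq_coherent _)); last by rewrite leq_double.
  by lia.
rewrite -(subrKA (b (n.*2 + 5))); apply: dvd2D; last by apply: b_coherent; lia.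
by apply/in_Pn_double; apply: (in_Pn_le _ (proj2 (hensel_seq_root n.*2))); lia.
Qed.
End Hensel.

Lemma diag_eval_integral (K : ramfield) (s d : nat) (a x : 'I_s -> Oel) n :
  (diag_eval K d a x (fun=> 0%N) n : zsqrt (Dof K)) =
  \sum_(i < s) (oseq (a i) n : zsqrt (Dof K)) * (oseq (x i) n : zsqrt (Dof K)) ^+ d.
Proof.
rewrite /diag_eval big_const_ord iter_fix ?maxnn //.
by apply: eq_bigr => i _; rewrite subnn muln0 zqpowE; congr (_ * _); apply: mulr1.
Qed.

Lemma level_shift (d T r : nat) : (r %/ d <= T)%N -> (r + d * (T - r %/ d) = d * T + r %% d)%N.
Proof.
move=> le; rewrite {1}(divn_eq r d) mulnBr (mulnC (r %/ d)%N).
have : (d * (r %/ d) <= d * T)%N by rewrite leq_mul2l le orbT.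
by lia.
Qed.

Section LiftToZero.
Variables (K : ramfield) (s d : nat) (a u : 'I_s -> Oel) (r : 'I_s -> nat).
Hypothesis a_decomp : forall i, Odecomp K (a i) (r i) (u i).
Local Notation R := (zsqrt (Dof K)).
Local Notation pi := (piof K : R).
Local Notation dvd2 := (@dvd2 (Dof K)).
Local Notation in_P := (@in_P K).
Local Notation in_Pn := (@in_Pn K).
Local Notation U i n := (oseq (u i) n : R).

Definition reduced_form n (x : 'I_s -> R) : R :=
  \sum_(i < s) pi ^+ (r i %% d) * U i n * x i ^+ d.

(* Scaling [x_i] by [pi ^ (T - r_i / d)] turns [f] into [pi ^ (d T)] times the
   reduced form. *)
Lemma zero_of_coherent_solution (x : 'I_s -> nat -> R) (p : 'I_s) :
  (forall i n k, (n <= k)%N -> dvd2 n (x i k - x i n)) ->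
  (forall n, ~ in_P (x p n)) ->
  (forall n, dvd2 n (reduced_form n (x^~ n))) ->
  has_nontrivial_zero K d a.
Proof.
move=> x_coh x_unit x_root.
pose T := (\max_(i < s) (r i %/ d))%N; pose e i := (T - r i %/ d)%N.
pose X i n : R := pi ^+ e i * x i n.
have X_coh i n k : (n <= k)%N -> zqcong n (X i k) (X i n).
  by move=> le; apply/(@zqcong_dvd2 (Dof K)); rewrite /X -mulrBr; apply/dvd2Ml/x_coh.
have zq0E : (zq0 : R) = 0 by [].
exists (fun i => MkOel (X_coh i)), (fun=> 0%N); split.
  exists p => /(_ (e p).+1) /(@zqcong_dvd2 (Dof K)); rewrite zq0E subr0.
  have le : ((e p).+1 <= (e p).+1.*2)%N by rewrite -addnn leq_addr.
  by move/(dvd2_in_Pn le); apply: not_in_Pn_piX_unit.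
move=> n; apply/(@zqcong_dvd2 (Dof K)); rewrite zq0E subr0 diag_eval_integral /=.
have a_approx i : dvd2 n ((oseq (a i) n : R) - pi ^+ r i * U i n).
  by apply/(@zqcong_dvd2 (Dof K)); rewrite -zqpowE; apply: a_decomp.
rewrite (eq_bigr (fun i => ((oseq (a i) n : R) - pi ^+ r i * U i n) * X i n ^+ d +
                            pi ^+ (d * T) * (pi ^+ (r i %% d) * U i n * x i n ^+ d))).
  rewrite big_split -mulr_sumr /=.
  by apply: dvd2D; [apply: dvd2_sum => i _; apply/dvd2Mr/a_approx | apply/dvd2Ml/x_root].
move=> i _; have shift : (r i + d * e i = d * T + r i %% d)%N.
  by apply: level_shift; apply: leq_bigmax.
rewrite /X exprMn -exprM (mulnC (e i)).
have -> : pi ^+ (d * T) * (pi ^+ (r i %% d) * U i n * x i n ^+ d) =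
          pi ^+ r i * U i n * (pi ^+ (d * e i) * x i n ^+ d).
  by rewrite !mulrA -exprD -shift exprD; ring.
by rewrite mulrBl subrK.
Qed.

Variable m : nat.
Hypotheses (dE : d = (2 * m)%N) (m_odd : odd m) (u_unit : forall i, Ounit K (u i)).

Lemma reduced_form_split n (x : 'I_s -> R) (p : 'I_s) : (r p %% d = 0)%N ->
  reduced_form n x = U p n * x p ^+ d +
                     \sum_(i < s | i != p) pi ^+ (r i %% d) * U i n * x i ^+ d.
Proof. by move=> rp; rewrite /reduced_form (bigD1 p) //= rp expr0 mul1r. Qed.

Lemma zero_of_solution_mod_P5 (z : 'I_s -> R) (p : 'I_s) :
  (r p %% d = 0)%N -> ~ in_P (z p) -> in_Pn 5 (reduced_form 3 z) ->
  has_nontrivial_zero K d a.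
Proof.
move=> rp zp z_root; have [v uv] := u_unit p.
pose V n : R := oseq v n.
have {}uv n : dvd2 n (U p n * V n - 1) by apply/(@zqcong_dvd2 (Dof K)); apply: uv.
(* Hensel: solve u_p t^d = - C, the other coordinates staying fixed. *)
pose C n := \sum_(i < s | i != p) pi ^+ (r i %% d) * U i n * z i ^+ d.
pose b n := - C n * V n.
have C_coh n k : (n <= k)%N -> dvd2 n (C k - C n).
  move=> le; rewrite /C -sumrB; apply: dvd2_sum => i _; rewrite -mulrBl -mulrBr.
  by apply/dvd2Mr/dvd2Ml/oseq_dvd2.
have b_coh n k : (n <= k)%N -> dvd2 n (b k - b n).
  move=> le; have -> : b k - b n = - ((C k - C n) * V k + C n * (V k - V n)).
    by rewrite /b; ring.
  by apply/dvd2N/dvd2D; [apply/dvd2Mr/C_coh | apply/dvd2Ml/oseq_dvd2].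
have t0_root : in_Pn 5 (z p ^+ d - b 5).
  have in_Pn5 n x : (3 <= n)%N -> dvd2 n x -> in_Pn 5 x.
    by move=> le h; apply: (dvd2_in_Pn _ h); lia.
  have -> : z p ^+ d - b 5 = V 5 * (reduced_form 3 z +
      (U p 5 - U p 3) * z p ^+ d + (C 5 - C 3)) - z p ^+ d * (U p 5 * V 5 - 1).
    by rewrite (reduced_form_split _ _ rp) -/(C 3) /b; ring.
  apply: in_PnB; last exact/in_PnMl/(in_Pn5 5).
  apply/in_PnMl/in_PnD; last exact/(in_Pn5 3)/C_coh.
  by apply: in_PnD => //; apply/in_PnMr/(in_Pn5 3)/oseq_dvd2.
have [t [t_coh t_root t_unit]] := hensel_lift dE m_odd b_coh zp t0_root.
apply: (zero_of_coherent_solution (x := fun i n => if i == p then t n else z i) (p := p)).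
- by move=> i n k le; case: eqP => _; [apply: t_coh | rewrite subrr; apply: dvd20].
- by move=> n; rewrite eqxx.
rewrite /= => n; rewrite (reduced_form_split _ _ rp) eqxx.
rewrite (eq_bigr (fun i => pi ^+ (r i %% d) * U i n * z i ^+ d)); last first.
  by move=> i /negbTE ->.
have -> : U p n * t n ^+ d + C n =
    U p n * (t n ^+ d - b n) - C n * (U p n * V n - 1) by rewrite /b; ring.
by apply: dvd2B; [apply/dvd2Ml/t_root | apply/dvd2Ml/uv].
Qed.
End LiftToZero.

(* Residues modulo P^5 = 4P are coded by [0, 32): for pi = sqrt D the residue
   of x + y sqrt D is (x mod 8, y mod 4), and for pi = 1 + sqrt D it is
   (x - y + (y mod 4) mod 8, y mod 4). *)
Definition residue5 (K : ramfield) (x : zq) : zq :=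
  if pi_is_sqrt K then ((x.1 %% 8)%Z, (x.2 %% 4)%Z)
  else let y := (x.2 %% 4)%Z in (((x.1 - x.2 + y) %% 8)%Z, y).
Definition code (x : zq) : nat := (absz x.1 * 4 + absz x.2)%N.
Definition decode (i : nat) : zq := ((i %/ 4)%N%:Z, (i %% 4)%N%:Z).
Definition zqneg (x : zq) : zq := (- x.1, - x.2).
Definition onepi (K : ramfield) : zq := zqadd zq1 (piof K).
Definition onepi2 (K : ramfield) : zq := zqmul (Dof K) (onepi K) (onepi K).
Definition in_Pb (K : ramfield) (x : zq) : bool :=
  if pi_is_sqrt K then (2 %| x.1)%Z else (2 %| x.1 - x.2)%Z.

(* Units modulo P^5 up to the factor (1 + pi)^2. *)
Definition unit_reps (K : ramfield) : seq zq :=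
  match K with
  | Q2_s2 | Q2_s10 => [:: (1, 0); (1, 1); (1, 2); (1, 3); (3, 1); (3, 3); (5, 0); (5, 2)]
  | Q2_sm2 | Q2_sm10 => [:: (1, 0); (1, 1); (1, 2); (1, 3); (3, 0); (3, 2); (5, 1); (5, 3)]
  | Q2_sm1 => [:: (0, 1); (0, 3); (1, 0); (1, 2); (2, 1); (3, 0); (5, 2); (6, 1)]
  | Q2_sm5 => [:: (0, 1); (1, 0); (1, 2); (2, 1); (2, 3); (3, 2); (4, 1); (5, 0)]
  end.

Definition unit_reps_cover (K : ramfield) : bool :=
  all (fun i => in_Pb K (decode i) ||
     has (fun r => (residue5 K r == decode i) ||
                   (residue5 K (zqmul (Dof K) r (onepi2 K)) == decode i)) (unit_reps K))
   (iota 0 32).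

Definition onepiX4_residue (K : ramfield) : zq :=
  residue5 K (zqadd (zqmul (Dof K) (onepi2 K) (onepi2 K)) (-1, 0)).

(* A bit vector [M] marks the residues mod P^5 reached by the units seen so far.
   A new unit [r] contributes r x^d = 0, r or r (1 + pi)^2, so the new set is
   made of r, r (1 + pi)^2 and the i with i, i - r or i - r (1 + pi)^2 in M. *)
Definition reach_table (K : ramfield) (r : zq) : nat * nat * seq (nat * nat) :=
  let rc := zqmul (Dof K) r (onepi2 K) in
  (code (residue5 K r), code (residue5 K rc),
   mkseq (fun i => (code (residue5 K (zqadd (decode i) (zqneg r))),
                    code (residue5 K (zqadd (decode i) (zqneg rc))))) 32).

Definition reach_step (t : nat * nat * seq (nat * nat)) (M : seq bool) : seq bool :=
  let: (i1, i2, l) := t in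
  map (fun p => let: (i, (j1, j2)) := p in
      [|| i1 == i, i2 == i, nth false M i, nth false M j1 | nth false M j2])%N
    (zip (iota 0 32) l).

Fixpoint all_tuples_check (tabs : seq (nat * nat * seq (nat * nat)))
    (leaf : seq bool -> bool) (k : nat) (M : seq bool) : bool :=
  if k is k'.+1 then all (fun t => all_tuples_check tabs leaf k' (reach_step t M)) tabs
  else leaf M.

Definition P_codes (K : ramfield) : seq nat :=
  filter (fun i => in_Pb K (decode i) && (i != 0)%N) (iota 0 32).
Definition reaches_0 (M : seq bool) : bool := nth false M 0.
Definition reaches_0_or_P (K : ramfield) (M : seq bool) : bool :=
  reaches_0 M || all (nth false M) (P_codes K).
Definition reaches_0_with_any_unit (K : ramfield) (M : seq bool) : bool :=
  reaches_0 M ||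
  all (fun r => nth false M (code (residue5 K (zqneg r))) ||
                nth false M (code (residue5 K (zqneg (zqmul (Dof K) r (onepi2 K))))))
      (unit_reps K).

Definition five_units_check (K : ramfield) (leaf : seq bool -> bool) : bool :=
  all_tuples_check (map (reach_table K) (unit_reps K)) leaf 5 (nseq 32 false).

Lemma five_units_reach_0_or_P K : five_units_check K (reaches_0_or_P K).
Proof. case: K; vm_cast_no_check (erefl true). Qed.
Lemma five_units_reach_0_sm1 : five_units_check Q2_sm1 reaches_0.
Proof. vm_cast_no_check (erefl true). Qed.
Lemma five_units_reach_0_with_any_unit_sm5 :
  five_units_check Q2_sm5 (reaches_0_with_any_unit Q2_sm5).
Proof. vm_cast_no_check (erefl true). Qed.
Lemma unit_reps_coverT K : unit_reps_cover K.
Proof. case: K; vm_cast_no_check (erefl true). Qed.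
Lemma onepiX4_residueE K : onepiX4_residue K = (0, 0).
Proof. by case: K; vm_compute. Qed.

Section Residues.
Variable K : ramfield.
Local Notation R := (zsqrt (Dof K)).
Local Notation in_P := (@in_P K).
Local Notation in_Pn := (@in_Pn K).

Lemma in_PbP (x : zq) : in_Pb K x <-> in_P (x : R).
Proof.
rewrite in_PE /in_Pb.
case: (pi_is_sqrt K); split=> [/dvdzP [q ->]|[q ->]].
all: by [exists q; rewrite mulrC | apply: dvdz_mulr].
Qed.

Lemma in_P_congr5 (x y : R) : in_Pn 5 (x - y) -> in_P y -> in_P x.
Proof. by move=> /(@in_Pn_in_P K 5 _ isT) h hy; rewrite -(subrK y x); apply: in_PD. Qed.

Lemma residue5_in_Pn (x : zq) : in_Pn 5 ((x : R) - (residue5 K x : R)).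
Proof.
apply/(in_Pn_doubleS 2); case: x => [x1 x2]; rewrite /residue5.
have e8 := divz_eq x1 8; have e4 := divz_eq x2 4.
move: (@in_PE K); case: (pi_is_sqrt K) => /= inPE.
  exists (2 * (x1 %/ 8)%Z, (x2 %/ 4)%Z); split; last by apply/inPE; exists (x1 %/ 8)%Z.
  by rewrite zsqrt_natE zsqrt_subE zsqrt_mulE /=; congr pair => /=; lia.
set y := (x2 %% 4)%Z; have e8' := divz_eq (x1 - x2 + y) 8.
exists (2 * ((x1 - x2 + y) %/ 8)%Z + (x2 %/ 4)%Z, (x2 %/ 4)%Z); split.
  by rewrite zsqrt_natE zsqrt_subE zsqrt_mulE /=; congr pair => /=; lia.
by apply/inPE; exists ((x1 - x2 + y) %/ 8)%Z => /=; lia.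
Qed.

Lemma residue5_eq (x y : zq) : residue5 K x = residue5 K y -> in_Pn 5 ((x : R) - (y : R)).
Proof.
move=> e; have -> : (x : R) - y = (x - residue5 K x) - (y - residue5 K y) by rewrite e; ring.
by apply: in_PnB; apply: residue5_in_Pn.
Qed.

Lemma decode_code (x : zq) :
  decode (code (residue5 K x)) = residue5 K x /\ (code (residue5 K x) < 32)%N.
Proof.
suff coded (a b : int) : decode (code ((a %% 8)%Z, (b %% 4)%Z)) = ((a %% 8)%Z, (b %% 4)%Z) /\
    (code ((a %% 8)%Z, (b %% 4)%Z) < 32)%N.
  by rewrite /residue5; case: (pi_is_sqrt K) => /=; apply: coded.
have := modz_ge0 a (isT : (8 : int) != 0); have := ltz_pmod a (isT : (0 < (8 : int))).
have := modz_ge0 b (isT : (4 : int) != 0); have := ltz_pmod b (isT : (0 < (4 : int))).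
case: (a %% 8)%Z => // {}a; case: (b %% 4)%Z => // {}b /= hb _ ha _.
rewrite /code /decode /=; split; last by lia.
have b4 : (b < 4)%N by lia.
by congr (Posz _, Posz _); rewrite ?divnMDl ?modnMDl ?divn_small ?modn_small ?addn0.
Qed.
End Residues.

Section Reach.
Variable K : ramfield.
Local Notation R := (zsqrt (Dof K)).
Local Notation c := (onepi K : R).
Local Notation in_P := (@in_P K).
Local Notation in_Pn := (@in_Pn K).

(* Weight [e] stands for the residue of x^d with x = 0, 1 or 1 + pi. *)
Definition dpow_res (e : nat) : R := if e == 0%N then 0 else if e == 1%N then 1 else c ^+ 2.

Fixpoint wsum (us : seq R) (es : seq nat) : R :=
  if (us, es) is (u :: us', e :: es') then u * dpow_res e + wsum us' es' else 0.

Definition weights (n : nat) (es : seq nat) :=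
  [/\ size es = n, all (fun e => e <= 2)%N es & has (fun e => e != 0)%N es].

Definition reach (us : seq R) (y : R) :=
  exists es, weights (size us) es /\ in_Pn 5 (wsum us es - y).

Lemma reach_congr us y y' : in_Pn 5 (y - y') -> reach us y' -> reach us y.
Proof.
move=> h [es [w hs]]; exists es; split=> //.
have -> : wsum us es - y = (wsum us es - y') - (y - y') by ring.
exact: in_PnB.
Qed.

Lemma reach_cons0 u us y : reach us y -> reach (u :: us) y.
Proof.
move=> [es [[s1 s2 s3] hs]]; exists (0%N :: es); split; first by split=> //=; rewrite s1.
by rewrite /= /dpow_res /= mulr0 add0r.
Qed.

Lemma reach_cons u us y e : (0 < e <= 2)%N -> reach us (y - u * dpow_res e) -> reach (u :: us) y.
Proof.
move=> he [es [[s1 s2 s3] hs]]; exists (e :: es); split.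
  by split=> /=; [rewrite s1 | rewrite s2 andbT; case/andP: he | rewrite s3 orbT].
by rewrite /=; move: hs; congr in_Pn; ring.
Qed.

Lemma wsum_nseq0 us : wsum us (nseq (size us) 0%N) = 0.
Proof. by elim: us => //= u us ->; rewrite /dpow_res /= mulr0 addr0. Qed.

Lemma reach_single u us y e : (0 < e <= 2)%N -> in_Pn 5 (u * dpow_res e - y) -> reach (u :: us) y.
Proof.
move=> /andP [e0 e2] h; exists (e :: nseq (size us) 0%N).
split; last by rewrite /= wsum_nseq0 addr0.
split=> /=; first by rewrite size_nseq.
  by rewrite e2; apply/allP => x /nseqP [->].
by rewrite -lt0n e0.
Qed.

Lemma wsum_nseq1 us : wsum us (nseq (size us) 1%N) = \sum_(x <- us) x.
Proof. by elim: us => [|x us IH]; rewrite ?big_nil ?big_cons //= IH /dpow_res /= mulr1. Qed.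

Lemma wsum_cat us1 us2 es1 es2 : size es1 = size us1 ->
  wsum (us1 ++ us2) (es1 ++ es2) = wsum us1 es1 + wsum us2 es2.
Proof.
elim: us1 es1 => [|x us1 IH] [|e es1] //= => [_|[h]]; first by rewrite add0r.
by rewrite IH // addrA.
Qed.

Lemma reach_ones us y : us != [::] -> in_Pn 5 (\sum_(x <- us) x - y) -> reach us y.
Proof.
move=> us0 h; exists (nseq (size us) 1%N); rewrite wsum_nseq1; split=> //.
split; [exact: size_nseq | by apply/allP => e /nseqP [->] | ].
by case: us us0 {h} => //= *; rewrite eqxx.
Qed.

Lemma onepi2E : (onepi2 K : R) = c ^+ 2.
Proof. by rewrite expr2. Qed.

Definition reach_all (us : seq R) (M : seq bool) :=
  forall i, nth false M i -> reach us (decode i : R).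

Lemma reach_all_nil : reach_all [::] (nseq 32 false).
Proof. by move=> i; rewrite nth_nseq if_same. Qed.

Lemma reach_all_step us M (r : zq) :
  reach_all us M -> reach_all ((r : R) :: us) (reach_step (reach_table K r) M).
Proof.
move=> h i; rewrite /reach_step /reach_table.
case: (ltnP i 32) => hi; last first.
  by rewrite nth_default // size_map size_zip size_iota size_mkseq minnn.
rewrite (nth_map (0%N, (0%N, 0%N))) ?size_zip ?size_iota ?size_mkseq ?minnn //.
rewrite nth_zip ?size_iota ?size_mkseq // nth_iota // nth_mkseq // add0n.
set y := decode i; set rc := zqmul (Dof K) r (onepi2 K).
have rcE : (rc : R) = (r : R) * dpow_res 2 by rewrite /dpow_res /= -onepi2E.
have r1E : (r : R) = (r : R) * dpow_res 1 by rewrite /dpow_res /= mulr1.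
have reach_new (x : zq) e : (0 < e <= 2)%N -> (x : R) = (r : R) * dpow_res e ->
    code (residue5 K x) = i -> reach ((r : R) :: us) y.
  move=> he xE xi; rewrite /y -xi (proj1 (decode_code K x)).
  by apply: (reach_single _ he); rewrite -xE; apply: residue5_in_Pn.
have reach_shift (x : zq) e : (0 < e <= 2)%N -> (x : R) = (r : R) * dpow_res e ->
    nth false M (code (residue5 K (zqadd y (zqneg x)))) -> reach ((r : R) :: us) y.
  move=> he xE /h; rewrite (proj1 (decode_code K _)) => hM; apply: (reach_cons he).
  by apply: reach_congr hM; rewrite -xE; apply: residue5_in_Pn.
move=> /orP [/eqP|/orP [/eqP|/orP [hM|/orP [hM|hM]]]].
- exact: (reach_new r 1%N).
- exact: (reach_new rc 2%N).
- exact/reach_cons0/h.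
- exact: (reach_shift r 1%N).
- exact: (reach_shift rc 2%N).
Qed.
End Reach.

Section ReachFacts.
Variable K : ramfield.
Local Notation R := (zsqrt (Dof K)).
Local Notation pi := (piof K : R).
Local Notation c := (onepi K : R).
Local Notation in_P := (@in_P K).
Local Notation in_Pn := (@in_Pn K).
Local Notation reach := (@reach K).
Local Notation reach_all := (@reach_all K).
Local Notation wsum := (@wsum K).
Local Notation dpow_res := (@dpow_res K).

Lemma all_tuples_check_sound leaf k M us rs :
  all_tuples_check (map (reach_table K) (unit_reps K)) leaf k M -> reach_all us M ->
  size rs = k -> all (mem (unit_reps K)) rs ->
  exists2 M', reach_all (catrev (rs : seq R) us) M' & leaf M'.
Proof.
elim: k M us rs => [|k IH] M us [|r rs] //= hc hM; first by exists M.
case=> hs /andP [hr hrs]; apply: (IH _ _ rs _ (reach_all_step (r := r) hM) hs hrs).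
by move/allP: hc; apply; apply: map_f.
Qed.

Lemma reaches_0P us M : reach_all us M -> reaches_0 M -> reach us 0.
Proof. exact. Qed.

Lemma reaches_0_or_PP us M : reach_all us M -> reaches_0_or_P K M ->
  reach us 0 \/ (forall y, in_P y -> ~ in_Pn 5 y -> reach us y).
Proof.
move=> hM /orP [h0|hall]; [left; exact: hM h0 | right => y hy ny].
have [yE lt] := decode_code K y; set j := code (residue5 K y) in yE lt.
have y_res := residue5_in_Pn K y.
have hj : j \in P_codes K.
  rewrite mem_filter mem_iota leq0n add0n lt !andbT; apply/andP; split.
    by apply/(in_PbP K); rewrite yE; apply: (in_P_congr5 _ hy); rewrite -opprB; apply: in_PnN.
  by apply/eqP => j0; apply: ny; move: y_res; rewrite -yE j0 subr0.
by apply: (reach_congr y_res); rewrite -yE; apply: hM; apply: (allP hall).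
Qed.

Lemma reaches_0_with_any_unitP us M : reach_all us M -> reaches_0_with_any_unit K M ->
  forall r, r \in unit_reps K -> reach ((r : R) :: us) 0.
Proof.
move=> hM /orP [h0|hall] r hr; first exact: reach_cons0 (hM 0%N h0).
have reach_neg (x : zq) e : (0 < e <= 2)%N -> (x : R) = (r : R) * dpow_res e ->
    nth false M (code (residue5 K (zqneg x))) -> reach ((r : R) :: us) 0.
  move=> he xE /hM; rewrite (proj1 (decode_code K _)) => hx; apply: (reach_cons he).
  by apply: reach_congr hx; rewrite sub0r -xE; apply: residue5_in_Pn.
case/orP: (allP hall r hr); first by apply: (reach_neg r 1%N) => //; rewrite /dpow_res /= mulr1.
by apply: (reach_neg _ 2%N) => //; rewrite /dpow_res /= -onepi2E.
Qed.

Lemma unit_repsP (u : R) : ~ in_P u -> exists2 r, r \in unit_reps K &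
   in_Pn 5 (u - (r : R)) \/ in_Pn 5 (u - (r : R) * c ^+ 2).
Proof.
move=> nu; have [uE lt] := decode_code K u.
have := allP (unit_reps_coverT K) (code (residue5 K u)); rewrite mem_iota lt uE => /(_ isT).
case/orP => [/(in_PbP K) h|/hasP [r hr /orP [/eqP e|/eqP e]]].
- by case: nu; apply: (in_P_congr5 _ h); apply: residue5_in_Pn.
- by exists r => //; left; apply: residue5_eq.
- by exists r => //; right; rewrite -onepi2E; apply: residue5_eq.
Qed.

Lemma onepi_unit : ~ in_P c.
Proof.
move=> h; apply: (@not_in_P1 K); rewrite -(addrK pi 1).
by apply: in_PB => //; apply: in_P_pi.
Qed.

Lemma onepiX4 : in_Pn 5 (c ^+ 4 - 1).
Proof.
have := @residue5_eq K (zqadd (zqmul (Dof K) (onepi2 K) (onepi2 K)) (-1, 0)) (0, 0).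
rewrite -/(onepiX4_residue K) onepiX4_residueE; have -> : residue5 K (0, 0) = (0, 0).
  by rewrite /residue5; case: (pi_is_sqrt K).
move=> /(_ erefl); have -> : (zqadd (zqmul (Dof K) (onepi2 K) (onepi2 K)) (-1, 0) : R) =
  (onepi2 K : R) * onepi2 K + (-1 : R) by [].
by rewrite onepi2E subr0 -exprD.
Qed.

Lemma onepiXd m : odd m -> in_Pn 5 (c ^+ (2 * m) - c ^+ 2).
Proof.
move=> m_odd; rewrite -{1}(odd_double_half m) m_odd -mul2n mulnDr muln1 addnC mulnA.
rewrite exprD exprM -[c ^+ 2 in X in in_Pn _ (_ - X)]mul1r -mulrBl; apply: in_PnMr.
elim: m./2 => [|k IH]; first by rewrite expr0 subrr; apply: in_Pn0.
have -> : c ^+ (2 * 2) ^+ k.+1 - 1 = c ^+ (2 * 2) * (c ^+ (2 * 2) ^+ k - 1) + (c ^+ 4 - 1).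
  by rewrite exprS; ring.
by apply: in_PnD; [apply: in_PnMl | apply: onepiX4].
Qed.
End ReachFacts.

Section Transfer.
Variable K : ramfield.
Local Notation R := (zsqrt (Dof K)).
Local Notation c := (onepi K : R).
Local Notation in_P := (@in_P K).
Local Notation in_Pn := (@in_Pn K).
Local Notation reach := (@reach K).
Local Notation wsum := (@wsum K).
Local Notation dpow_res := (@dpow_res K).

Definition assoc5 (u r : R) := in_Pn 5 (u - r) \/ in_Pn 5 (u - r * c ^+ 2).

Definition swap12 (e : nat) : nat := if e == 1%N then 2%N else if e == 2%N then 1%N else e.

Lemma assoc5_dpow_res u r e : assoc5 u r -> (e <= 2)%N ->
  exists2 e', e' = e \/ e' = swap12 e & in_Pn 5 (u * dpow_res e' - r * dpow_res e).
Proof.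
case=> h he; [exists e; first by left | exists (swap12 e); first by right].
  by rewrite -mulrBl; apply: in_PnMr.
move: he; rewrite /swap12 /dpow_res; case: e => [|[|[|e]]] //= _.
- by rewrite !mulr0 subrr; apply: in_Pn0.
- have -> : u * c ^+ 2 - r * 1 = (u - r * c ^+ 2) * c ^+ 2 + r * (c ^+ 4 - 1).
    by rewrite (_ : 4 = 2 + 2)%N // exprD; ring.
  by apply: in_PnD; [apply: in_PnMr | apply/in_PnMl/onepiX4].
- by rewrite mulr1.
Qed.

Lemma wsum_assoc5 us rs es : size us = size rs ->
  (forall k, (k < size us)%N -> assoc5 us`_k rs`_k) ->
  size es = size rs -> all (fun e => e <= 2)%N es ->
  exists es', [/\ size es' = size us, all (fun e => e <= 2)%N es',
     has (fun e => e != 0)%N es' = has (fun e => e != 0)%N es &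
     in_Pn 5 (wsum us es' - wsum rs es)].
Proof.
elim: us rs es => [|u us IH] [|r rs] [|e es] //=.
  by move=> _ _ _ _; exists [::]; split=> //; rewrite subrr; apply: in_Pn0.
move=> [hs] hk [hes] /andP [he hall].
have [es' [s1 s2 s3 s4]] := IH rs es hs (fun k => hk k.+1) hes hall.
have [e' he' hu] := assoc5_dpow_res (hk 0%N isT) he.
exists (e' :: es'); split=> /=; first by rewrite s1.
- by rewrite s2 andbT; case: he' => ->; move: he; rewrite /swap12; case: (e) => [|[|[|]]].
- by rewrite s3; case: he' => -> //; rewrite /swap12; case: (e) => [|[|[|]]].
have -> : u * dpow_res e' + wsum us es' - (r * dpow_res e + wsum rs es) =
  (u * dpow_res e' - r * dpow_res e) + (wsum us es' - wsum rs es) by ring.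
exact: in_PnD.
Qed.

Lemma reach_assoc5 us rs y : size us = size rs ->
  (forall k, (k < size us)%N -> assoc5 us`_k rs`_k) -> reach rs y -> reach us y.
Proof.
move=> hs hk [es [[s1 s2 s3] h]].
have [es' [t1 t2 t3 t4]] := wsum_assoc5 hs hk s1 s2.
exists es'; split; first by split=> //; rewrite t3.
have -> : wsum us es' - y = (wsum us es' - wsum rs es) + (wsum rs es - y) by ring.
exact: in_PnD.
Qed.

Lemma unit_reps_assoc5 (us : seq R) : {in us, forall x, ~ in_P x} ->
  exists2 rs : seq zq, all (mem (unit_reps K)) rs &
    size rs = size us /\ forall k, (k < size us)%N -> assoc5 us`_k (rs`_k : R).
Proof.
elim: us => [|x us IH] hu; first by exists [::].
have [|rs rs_reps [s1 s3]] := IH; first by move=> y yu; apply: hu; rewrite inE yu orbT.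
have [r0 hr hr'] := unit_repsP (hu x (mem_head _ _)).
by exists (r0 :: rs); [rewrite /= hr | split=> [/=|[|k]]; [rewrite s1 | | apply: s3]].
Qed.

Lemma reach_of_five_units_check leaf (us : seq R) :
  {in us, forall x, ~ in_P x} -> size us = 5%N -> five_units_check K leaf ->
  exists2 rs : seq zq, (size rs = size us /\ forall k, (k < size us)%N -> assoc5 us`_k (rs`_k : R))
    & exists2 M, reach_all (rs : seq R) M & leaf M.
Proof.
move=> hu h5 hc; have [rs rs_reps [s1 s3]] := unit_reps_assoc5 hu.
exists rs => //; have := all_tuples_check_sound (rs := rev rs) hc (@reach_all_nil K).
rewrite size_rev s1 h5 all_rev => /(_ erefl rs_reps) [M hM hl].
by exists M => //; move: hM; rewrite catrevE cats0 revK.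
Qed.

Lemma reach_five_units (us : seq R) : {in us, forall x, ~ in_P x} -> size us = 5%N ->
  reach us 0 \/ (forall y, in_P y -> ~ in_Pn 5 y -> reach us y).
Proof.
move=> hu h5.
have [rs [s1 s3] [M hM hl]] := reach_of_five_units_check hu h5 (five_units_reach_0_or_P K).
case: (reaches_0_or_PP hM hl) => h; [left | right => y hy ny].
  exact: reach_assoc5 (esym s1) s3 h.
exact/(reach_assoc5 (esym s1) s3)/h.
Qed.
End Transfer.

Lemma reach_five_units_sm1 (us : seq (zsqrt (Dof Q2_sm1))) :
  {in us, forall x, ~ in_P x} -> size us = 5%N -> reach us 0.
Proof.
move=> hu h5; have [rs [s1 s3] [M hM hl]] := reach_of_five_units_check hu h5 five_units_reach_0_sm1.
exact: reach_assoc5 (esym s1) s3 (reaches_0P hM hl).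
Qed.

Lemma reach_six_units_sm5 (x : zsqrt (Dof Q2_sm5)) (us : seq (zsqrt (Dof Q2_sm5))) :
  {in x :: us, forall y, ~ in_P y} -> size us = 5%N -> reach (x :: us) 0.
Proof.
move=> hu h5.
have [|rs [s1 s3] [M hM hl]] := reach_of_five_units_check _ h5 five_units_reach_0_with_any_unit_sm5.
  by move=> y yu; apply: hu; rewrite inE yu orbT.
have [r0 hr hr'] := unit_repsP (hu x (mem_head _ _)).
apply: (reach_assoc5 (rs := (r0 :: rs : seq zq))); last exact: reaches_0_with_any_unitP hM hl r0 hr.
  by rewrite /= s1.
by case=> [|k] //= lt; apply: s3.
Qed.

Section Zeros.
Variables (K : ramfield) (m d s : nat) (a u : 'I_s -> Oel) (r : 'I_s -> nat).
Hypotheses (dE : d = (2 * m)%N) (m_odd : odd m).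
Hypotheses (u_unit : forall i, Ounit K (u i)) (a_decomp : forall i, Odecomp K (a i) (r i) (u i)).
Local Notation R := (zsqrt (Dof K)).
Local Notation pi := (piof K : R).
Local Notation c := (onepi K : R).
Local Notation in_P := (@in_P K).
Local Notation in_Pn := (@in_Pn K).
Local Notation reach := (@reach K).
Local Notation wsum := (@wsum K).
Local Notation dpow_res := (@dpow_res K).

Definition coef (i : 'I_s) : R := pi ^+ (r i %% d) * (oseq (u i) 3 : R).

Definition dpow_base (e : nat) : R := if e == 0%N then 0 else if e == 1%N then 1 else c.

Lemma dpow_baseX e : in_Pn 5 (dpow_base e ^+ d - dpow_res e).
Proof.
rewrite /dpow_base /dpow_res; case: eqP => _.
  by rewrite expr0n eqn0Ngt (d_gt0 dE m_odd) subrr; apply: in_Pn0.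
case: eqP => _; first by rewrite expr1n subrr; apply: in_Pn0.
by rewrite dE; apply: onepiXd.
Qed.

Lemma coef_unit i : (r i %% d = 0)%N -> ~ in_P (coef i).
Proof. by move=> ri; rewrite /coef ri expr0 mul1r; apply: Ounit_not_in_P. Qed.

Lemma sum_dpow_base_wsum (L : seq 'I_s) (es : seq nat) : uniq L -> size es = size L ->
  in_Pn 5 (\sum_(i <- L) coef i * dpow_base (nth 0%N es (index i L)) ^+ d - wsum (map coef L) es).
Proof.
elim: L es => [|j L IH] [|e es] //=; first by rewrite big_nil subrr => _ _; apply: in_Pn0.
case/andP => jL uL [hs]; rewrite big_cons eqxx /=.
rewrite (eq_big_seq (fun i => coef i * dpow_base (nth 0%N es (index i L)) ^+ d)); last first.
  by move=> i iL; case: eqP => [ji|//]; move: jL; rewrite ji iL.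
have -> : forall A B C D : R, A + B - (C + D) = (A - C) + (B - D) by move=> *; ring.
by apply: in_PnD; [rewrite -mulrBr; apply/in_PnMl/dpow_baseX | apply: IH].
Qed.

Lemma zero_of_weights (L : seq 'I_s) (es : seq nat) (p : 'I_s) :
  uniq L -> size es = size L -> p \in L -> (r p %% d = 0)%N -> nth 0%N es (index p L) != 0%N ->
  in_Pn 5 (wsum (map coef L) es) -> has_nontrivial_zero K d a.
Proof.
move=> uL hs pL rp ep hw.
pose z i := if i \in L then dpow_base (nth 0%N es (index i L)) else 0.
apply: (zero_of_solution_mod_P5 a_decomp dE m_odd u_unit (z := z) (p := p)) => //.
  rewrite /z pL /dpow_base (negbTE ep); case: eqP => _; [exact: not_in_P1 | exact: onepi_unit].
rewrite /reduced_form (bigID (mem L)) /= [X in _ + X]big1 => [|i /negbTE iL]; last first.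
  by rewrite /z iL expr0n eqn0Ngt (d_gt0 dE m_odd) mulr0.
rewrite addr0 -big_uniq //=.
rewrite (eq_big_seq (fun i => coef i * dpow_base (nth 0%N es (index i L)) ^+ d)).
  rewrite -(subrK (wsum (map coef L) es) (\sum_(i <- L) _)).
  by apply: in_PnD => //; apply: sum_dpow_base_wsum.
by move=> i iL; rewrite /z iL.
Qed.

Lemma zero_of_reach (L1 L2 : seq 'I_s) : uniq (L1 ++ L2) -> {in L1, forall i, r i %% d = 0}%N ->
  reach (map coef L1) (- \sum_(i <- L2) coef i) -> has_nontrivial_zero K d a.
Proof.
move=> uL hL [es1 [[s1 _ /hasP [e e_in e0]] hw]]; rewrite size_map in s1.
have [p pL pk] : exists2 p, p \in L1 & index p L1 = index e es1.
  by apply: index_of_nth; [case/andP: (etrans (esym (cat_uniq L1 L2)) uL) | rewrite -s1 index_mem].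
apply: (zero_of_weights (L := L1 ++ L2) (es := es1 ++ nseq (size L2) 1%N) (p := p)) => //.
- by rewrite !size_cat s1 size_nseq.
- by rewrite mem_cat pL.
- exact: hL.
- by rewrite index_cat pL nth_cat pk index_mem e_in nth_index.
rewrite map_cat wsum_cat ?size_map // -(size_map coef) wsum_nseq1 big_map.
by move: hw; rewrite opprK.
Qed.

Lemma coef_units (L : seq 'I_s) : {in L, forall i, r i %% d = 0}%N ->
  {in map coef L, forall x, ~ in_P x}.
Proof. by move=> hL x /mapP [i iL ->]; apply/coef_unit/hL. Qed.

Lemma zero_of_level0_and_low_level (L : seq 'I_s) (q : 'I_s) :
  uniq L -> size L = 5%N -> {in L, forall i, r i %% d = 0}%N -> (0 < r q %% d <= 4)%N ->
  has_nontrivial_zero K d a.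
Proof.
move=> uL L5 hL /andP [q0 q4].
have [h0|hP] := reach_five_units (coef_units hL) (etrans (size_map _ _) L5).
  by apply: (zero_of_reach (L1 := L) (L2 := [::])); rewrite ?cats0 ?big_nil ?oppr0.
have qL : q \notin L by apply/negP => /hL rq; rewrite rq in q0.
apply: (zero_of_reach (L1 := L) (L2 := [:: q])) => //; first by rewrite cat_uniq uL /= orbF andbT.
rewrite big_seq1; apply: hP.
  by apply/in_PN; rewrite /coef -(prednK q0) exprS -mulrA; apply/in_PMr/in_P_pi.
move=> /in_PnN; rewrite opprK => /(in_Pn_le (q4 : (r q %% d).+1 <= 5)%N).
by apply: not_in_Pn_piX_unit; apply: Ounit_not_in_P.
Qed.

Lemma zero_of_seven_level0 (x6 x7 : 'I_s) (L : seq 'I_s) :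
  uniq ([:: x6; x7] ++ L) -> size L = 5%N -> {in [:: x6; x7] ++ L, forall i, r i %% d = 0}%N ->
  has_nontrivial_zero K d a.
Proof.
move=> uL L5 hL; have [hL67 hL5] : {in [:: x6; x7], forall i, r i %% d = 0}%N /\
  {in L, forall i, r i %% d = 0}%N by split=> i hi; apply: hL; rewrite mem_cat hi ?orbT.
have u67 : uniq [:: x6; x7] by move: uL; rewrite cat_uniq => /andP [].
have [c6 c7] : ~ in_P (coef x6) /\ ~ in_P (coef x7).
  by split; apply/coef_unit/hL67; rewrite !inE eqxx ?orbT.
case: (classic (in_Pn 5 (coef x6 + coef x7))) => h67.
  apply: (zero_of_reach (L1 := [:: x6; x7]) (L2 := [::])); rewrite ?cats0 ?big_nil ?oppr0 //.
  by apply: reach_ones => //; rewrite /= big_cons big_seq1 subr0.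
have [h0|hP] := reach_five_units (coef_units hL5) (etrans (size_map _ _) L5).
  apply: (zero_of_reach (L1 := L) (L2 := [::])); rewrite ?cats0 ?big_nil ?oppr0 //.
  by move: uL; rewrite cat_uniq => /and3P [].
apply: (zero_of_reach (L1 := L) (L2 := [:: x6; x7])) => //; first by rewrite uniq_catC.
rewrite big_cons big_seq1; apply: hP; first exact/in_PN/in_P_addr_units.
by move=> /in_PnN; rewrite opprK.
Qed.

Lemma zero_of_level0_units_reaching (n : nat) (L : seq 'I_s) :
  uniq L -> size L = n -> {in L, forall i, r i %% d = 0}%N ->
  (forall us : seq R, {in us, forall x, ~ in_P x} -> size us = n -> reach us 0) ->
  has_nontrivial_zero K d a.
Proof.
move=> uL Ln hL reach_n.
apply: (zero_of_reach (L1 := L) (L2 := [::])); rewrite ?cats0 ?big_nil ?oppr0 //.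
exact: reach_n (coef_units hL) (etrans (size_map _ _) Ln).
Qed.
End Zeros.

Lemma level0_list (d s : nat) (r : 'I_s -> nat) k : (k <= level_count d r 0)%N ->
  exists L : seq 'I_s, [/\ uniq L, size L = k & {in L, forall i, r i %% d = 0}%N].
Proof.
move=> hk; exists (take k (enum [set i | r i %% d == 0]%N)); split.
- exact/take_uniq/enum_uniq.
- by rewrite size_takel // -cardE.
by move=> i /mem_take; rewrite mem_enum inE => /eqP.
Qed.

Lemma level0_count_no_low_levels (d s : nat) (r : 'I_s -> nat) : (4 < d)%N -> normalized d r ->
  (forall i, ~~ (0 < r i %% d <= 4)%N) -> (5 * s <= d * level_count d r 0)%N.
Proof.
move=> d4 r_norm no_low; have := r_norm 4%N d4.
rewrite big_ord_recl big1 ?addn0 // => l _.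
apply/eqP; rewrite cards_eq0; apply/eqP/setP => i; rewrite !inE.
by apply: contraNF (no_low i) => /eqP ->; rewrite lift0 ltn_ord.
Qed.

Theorem lemma12 (K : ramfield) (m d s : nat) (a u : 'I_s -> Oel)
  (r : 'I_s -> nat) :
  d = (2 * m)%N -> odd m -> (3 <= m)%N ->
  (* a_i in O \ {0}, written a_i = pi^(r i) u_i with u_i a unit *)
  (forall i, ~ Ozero (a i)) ->
  (forall i, Ounit K (u i)) ->
  (forall i, Odecomp K (a i) (r i) (u i)) ->
  normalized d r ->
  (5 <= level_count d r 0)%N ->
  ((7 * d <= 5 * s)%N \/
   ((K = Q2_sm1 \/ K = Q2_sm5) /\ (d + 1 <= s)%N)) ->
  has_nontrivial_zero K d a.
Proof.
move=> dE m_odd m3 _ u_unit a_decomp r_norm level0_5 s_large.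
have [L5 [uL5 sL5 hL5]] := level0_list level0_5.
case: (boolP [exists q, 0 < r q %% d <= 4]%N) => [/existsP [q hq] | /existsPn no_low].
  exact: (zero_of_level0_and_low_level dE m_odd u_unit a_decomp uL5 sL5 hL5 hq).
have d0 := d_gt0 dE m_odd.
have d4 : (4 < d)%N by lia.
have count := level0_count_no_low_levels d4 r_norm no_low.
case: s_large => [s7 | [[eK | eK] s1]].
- have l7 : (7 <= level_count d r 0)%N by rewrite -(leq_pmul2l d0); lia.
  case: (level0_list l7) => [[|x6 [|x7 L]] [uL sL hL]] //.
  by apply: (zero_of_seven_level0 dE m_odd u_unit a_decomp uL) => //; case: sL.
- subst K.
  exact: (zero_of_level0_units_reaching dE m_odd u_unit a_decomp uL5 sL5 hL5 reach_five_units_sm1).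
subst K; have l6 : (6 <= level_count d r 0)%N by rewrite -(ltn_pmul2l d0); lia.
case: (level0_list l6) => [[|x L] [uL sL hL]] //.
apply: (zero_of_level0_units_reaching dE m_odd u_unit a_decomp uL sL hL) => -[|y us] // hu [].
exact: reach_six_units_sm5.
Qed.
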